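(* Let $\mathcal{I}$ be an index set, $S$ a non-empty finite set, and $\emptyset\ne\mathcal{K}_\iota\subseteq S$ for $\iota\in\mathcal{I}$; define $\varepsilon_{i,j}=1$ if $\mathcal{K}_i\cap\mathcal{K}_j=\emptyset$ and $\varepsilon_{i,j}=0$ otherwise. Let $(\iota_1,\dots,\iota_k)\in I^\varepsilon_k$, and let $\sigma\in\tilde S_k$ be such that for every $s\in S$ the induced permutation $\sigma_s$ of $J_s$ describes a non-crossing partition of $J_s$. Then $\sigma$ has at least one fixed point.
   Context: $I^\varepsilon_k$ is the set of $(i_1,\dots,i_k)\in\mathcal{I}^k$ such that whenever $i_j=i_\ell$ with $j<\ell$ there is $m$ with $j<m<\ell$, $i_m\ne i_j$ and $\varepsilon_{i_ji_m}=0$. $\tilde S_k=\{\sigma\in S_k:\iota_{\sigma(j)}=\iota_j\text{ for all }j\}$. For $s\in S$, $J_s=\{j\in\{1,\dots,k\}:s\in\mathcal{K}_{\iota_j}\}$, which is preserved by every $\sigma\in\tilde S_k$; $\sigma_s$ is the restriction of $\sigma$ to $J_s$. A permutation describes a non-crossing partition if the partition into its cycles is non-crossing with respect to the natural order of $J_s$. *)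

From mathcomp Require Import all_boot all_fingroup.
Set Implicit Arguments. Unset Strict Implicit. Unset Printing Implicit Defensive.

Definition eps (I : Type) (S : finType) (K : I -> {set S}) (i j : I) : bool :=
  K i :&: K j == set0.

Definition in_Ieps (I : Type) (S : finType) (K : I -> {set S}) (k : nat)
  (iota : 'I_k -> I) : Prop :=
  forall j l : 'I_k, (j < l)%N -> iota j = iota l ->
    exists m : 'I_k, [/\ (j < m)%N, (m < l)%N, iota m <> iota j
                        & ~~ eps K (iota j) (iota m)].

Definition in_tildeS (I : Type) (k : nat) (iota : 'I_k -> I) (sigma : 'S_k) : Prop :=
  forall j : 'I_k, iota (sigma j) = iota j.

Definition Jset (I : Type) (S : finType) (K : I -> {set S}) (k : nat)
  (iota : 'I_k -> I) (s : S) : {set 'I_k} :=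
  [set j : 'I_k | s \in K (iota j)].

Definition noncrossing (k : nat) (P : {set {set 'I_k}}) : Prop :=
  forall A B : {set 'I_k}, A \in P -> B \in P -> A != B ->
    forall a b c d : 'I_k, a \in A -> c \in A -> b \in B -> d \in B ->
      ~ [/\ (a < b)%N, (b < c)%N & (c < d)%N].

(* the partition of J into the cycles of sigma restricted to J (J is assumed
   sigma-stable, so the cycle of sigma_s through j is the sigma-orbit of j) *)
Definition cycles_on (k : nat) (sigma : 'S_k) (J : {set 'I_k}) : {set {set 'I_k}} :=
  [set porbit sigma j | j in J].

From mathcomp Require Import all_boot all_fingroup.
From mathcomp Require Import zify.

Set Implicit Arguments.
Unset Strict Implicit.
Unset Printing Implicit Defensive.

(* Between two elements j < l of one cycle of sigma lies a fixed point, by induction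
   on l - j. As iota is constant on cycles, iota_j = iota_l, so some m with j < m < l
   has iota_m <> iota_j and a point s in K_{iota_j} and K_{iota_m}. Then j, l, m lie
   in J_s and the cycle of m, being another block, is nested strictly inside (j, l) by
   non-crossingness; so either sigma m = m or m, sigma m is a closer pair of one cycle. *)

Lemma perm_porbit (T : finType) (s : {perm T}) (x : T) : s x \in porbit s x.
Proof. by rewrite -{1}[s]expg1 mem_porbit. Qed.

Lemma porbit_invariant (T : finType) (I : Type) (s : {perm T}) (f : T -> I) :
  (forall x, f (s x) = f x) -> forall x y, y \in porbit s x -> f y = f x.
Proof.
move=> fs x y /porbitP [i ->]; rewrite permX.
by elim: i => //= i IHi; rewrite fs.
Qed.

Lemma noncrossing_porbit_nested (k : nat) (sigma : 'S_k) (J : {set 'I_k})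
    (j l m : 'I_k) :
  noncrossing (cycles_on sigma J) -> j \in J -> m \in J ->
  l \in porbit sigma j -> m \notin porbit sigma j -> (j < m < l)%N ->
  forall x, x \in porbit sigma m -> (j < x < l)%N.
Proof.
move=> nc jJ mJ lPj mPj /andP [jm ml] x xPm.
have Cj : porbit sigma j \in cycles_on sigma J by apply: imset_f.
have Cm : porbit sigma m \in cycles_on sigma J by apply: imset_f.
have Cjm : porbit sigma j != porbit sigma m by rewrite eq_porbit_mem porbit_sym.
have xPj : x \notin porbit sigma j.
  apply: contra Cjm; rewrite -eq_porbit_mem => /eqP <-.
  by rewrite eq_porbit_mem.
have [xj|jx] := ltnP x j.
  by case: (nc _ _ Cm Cj _ x j m l xPm (porbit_id _ _) (porbit_id _ _) lPj);
    rewrite 1?eq_sym.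
have {}jx : (j < x)%N.
  by rewrite ltn_neqAle jx andbT; apply: contraNneq xPj => /val_inj <-; exact: porbit_id.
rewrite jx /=; have [//|lx] := ltnP x l.
have {}lx : (l < x)%N.
  by rewrite ltn_neqAle lx andbT; apply: contraNneq xPj => /val_inj <-.
by case: (nc _ _ Cj Cm Cjm j m l x (porbit_id _ _) lPj (porbit_id _ _) xPm).
Qed.

Section FixedPointBetween.

Variables (I : Type) (S : finType) (K : I -> {set S}) (k : nat).
Variables (iota : 'I_k -> I) (sigma : 'S_k).
Hypothesis iotaP : in_Ieps K iota.
Hypothesis sigmaP : in_tildeS iota sigma.
Hypothesis ncP : forall s : S, noncrossing (cycles_on sigma (Jset K iota s)).

Lemma fixed_point_between (j l : 'I_k) :
  (j < l)%N -> l \in porbit sigma j -> exists2 z : 'I_k, (j < z < l)%N & sigma z = z.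
Proof.
have [n] := ubnP (l - j); elim: n j l => // n IHn j l dist jl lPj.
have iota_cycle := porbit_invariant sigmaP.
have [m [jm ml iota_mj /set0Pn [s]]] := iotaP jl (esym (iota_cycle _ _ lPj)).
rewrite inE => /andP [sj sm].
have mPj : m \notin porbit sigma j by apply/negP => /iota_cycle.
have nested := noncrossing_porbit_nested (ncP (s := s)) _ _ lPj mPj.
have /andP [jm' m'l] : (j < sigma m < l)%N.
  by apply: nested; rewrite ?inE ?jm ?perm_porbit.
have inner (x y : 'I_k) : (j < x)%N -> (y < l)%N -> (x < y)%N ->
    y \in porbit sigma x -> exists2 z : 'I_k, (j < z < l)%N & sigma z = z.
  move=> jx yl xy yPx; have [|z /andP [xz zy] fz] := IHn x y _ xy yPx; first by lia.
  by exists z; rewrite // (ltn_trans jx xz) (ltn_trans zy yl).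
have [fixm|] := eqVneq (sigma m) m; first by exists m; rewrite ?jm.
rewrite -(inj_eq val_inj) /= neq_ltn => /orP [m'm|mm'].
- by apply: (inner (sigma m) m) => //; rewrite porbit_sym perm_porbit.
- exact: inner jm m'l mm' (perm_porbit _ _).
Qed.

Lemma porbit_neq_fixed_point (x y : 'I_k) :
  x != y -> y \in porbit sigma x -> exists z : 'I_k, sigma z = z.
Proof.
rewrite -(inj_eq val_inj) neq_ltn => /orP [xy|yx] yPx.
- by have [z _ fz] := fixed_point_between xy yPx; exists z.
- by have [|z _ fz] := fixed_point_between yx; [rewrite porbit_sym | exists z].
Qed.

End FixedPointBetween.

Theorem mainTheorem4 (I : Type) (S : finType) (K : I -> {set S})
  (k : nat) (iota : 'I_k -> I) (sigma : 'S_k) :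
  (0 < #|S|)%N ->
  (forall i : I, K i != set0) ->
  (0 < k)%N ->
  in_Ieps K iota ->
  in_tildeS iota sigma ->
  (forall s : S, noncrossing (cycles_on sigma (Jset K iota s))) ->
  exists j : 'I_k, sigma j = j.
Proof.
move=> _ _ k_gt0 iotaP sigmaP ncP.
pose j : 'I_k := Ordinal k_gt0.
have [fixj|] := eqVneq (sigma j) j; first by exists j.
rewrite eq_sym => /(porbit_neq_fixed_point iotaP sigmaP ncP); apply.
exact: perm_porbit.
Qed.
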